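(* Let $G=(V,E)$ be a hypergraph, $k\ge 2$ an integer, and $\emptyset\neq R\subsetneq U\subsetneq V$. Let $S=\{u_1,\dots,u_p\}\subseteq U\setminus R$ with $p\ge 2k-2$. For each $i\in[p]$ let $(\overline{A_i},A_i)$ be a minimum $((S\cup R)\setminus\{u_i\},\overline{U})$-terminal cut. Suppose that $u_i\in A_i\setminus\bigl(\bigcup_{j\in[p]\setminus\{i\}}A_j\bigr)$ for every $i\in[p]$. Then there exists a $k$-partition $(P_1,\dots,P_k)$ of $V$ with $\overline{U}\subsetneq P_k$ such that \[\mathrm{cost}(P_1,\dots,P_k)\le \tfrac12\min\{d(A_i)+d(A_j): i,j\in[p],\ i\neq j\}.\]
   Context: A hypergraph $G=(V,E)$ has finite vertex set $V$ and finite multiset $E$ of hyperedges (subsets of $V$). For $X\subseteq V$, $\overline X=V\setminus X$ and $d(X)$ is the number of hyperedges meeting both $X$ and $\overline X$. For a partition of $V$ into non-empty parts, $\mathrm{cost}$ is the number of hyperedges meeting at least two parts. For disjoint $S',T'\subseteq V$, a 2-partition $(X,\overline X)$ is an $(S',T')$-terminal cut if $S'\subseteq X\subseteq V\setminus T'$ (so here $(S\cup R)\setminus\{u_i\}\subseteq\overline{A_i}$ and $\overline U\subseteq A_i$); it is minimum if $d(X)$ is minimum among all $(S',T')$-terminal cuts. *)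

From mathcomp Require Import all_boot.
Set Implicit Arguments. Unset Strict Implicit. Unset Printing Implicit Defensive.

Section Hypergraph.
Variable V : finType.
(* A hypergraph on vertex set V: the hyperedges form a finite multiset,
   represented as a list of subsets of V. *)
Variable E : seq {set V}.

Definition dcut (X : {set V}) : nat :=
  count (fun e : {set V} => (e :&: X != set0) && (e :&: ~: X != set0)) E.

Definition terminal_cut (S' T' X : {set V}) : bool :=
  (S' \subset X) && (X \subset ~: T').

Definition min_terminal_cut (S' T' X : {set V}) : Prop :=
  terminal_cut S' T' X /\
  forall Y : {set V}, terminal_cut S' T' Y -> dcut X <= dcut Y.

Definition kpartition (k : nat) (P : 'I_k -> {set V}) : Prop :=
  (forall i, P i != set0) /\
  (forall i j, i != j -> [disjoint P i & P j]) /\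
  (forall v : V, exists i, v \in P i).

Definition cost (k : nat) (P : 'I_k -> {set V}) : nat :=
  count (fun e : {set V} =>
    [exists i : 'I_k, exists j : 'I_k,
       [&& i != j, e :&: P i != set0 & e :&: P j != set0]]) E.

End Hypergraph.

From mathcomp Require Import all_boot zify.
Set Implicit Arguments. Unset Strict Implicit. Unset Printing Implicit Defensive.

(* For a family J of the sets A_l, call the depth of a vertex the number of
   members of J containing it, and give each hyperedge e a weight in {0,1,2}:
   the number of the two sets N (depth 0) and L (depth >= 2) that e crosses,
   raised to 2 when e contains two depth-1 vertices lying in different sets.
   For J = {i, j} the total weight is at most d(A_i) + d(A_j).  Adding a set
   A_l to J raises the total weight by at most d(A_l) - d(A_l & L); since
   A_l & L still contains the complement of U, minimality of A_l makes this
   nonpositive, so the total weight of the whole family is also at most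
   d(A_i) + d(A_j).  The cores Z_l = A_l minus the other A_m are disjoint,
   contain u_l and avoid both R and the complement of U.  Two disjoint blocks
   of k - 1 cores, each completed by the rest of V, are k-partitions; a
   hyperedge cut by such a partition crosses one of its cores, hence has
   positive weight, and a hyperedge cut by both crosses two different cores,
   hence has weight 2.  So the two costs add up to at most d(A_i) + d(A_j). *)

Lemma count_sumE (T : Type) (a : pred T) (s : seq T) :
  count a s = \sum_(x <- s) a x.
Proof. by rewrite -sum1_count big_mkcond; apply: eq_bigr => x _; case: (a x). Qed.

Lemma ord_pred_le_eq k (s t : 'I_k) : k.-1 <= s -> k.-1 <= t -> s = t.
Proof.
case: k s t => [[] // | n] s t /= ns nt; apply: ord_inj.
by have := ltn_ord s; have := ltn_ord t; lia.
Qed.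

Lemma disjoint_injections m p : m + m <= p ->
  exists c c' : 'I_m -> 'I_p, [/\ injective c, injective c' & forall s t, c s != c' t].
Proof.
move=> le_mp.
exists (fun s => widen_ord le_mp (lshift m s)), (fun t => widen_ord le_mp (rshift m t)).
split=> [s t [] /val_inj | s t [] /addnI /val_inj | s t] //.
by apply/eqP => -[]; have := ltn_ord s; lia.
Qed.

Section Crossing.
Variable V : finType.
Implicit Types (e X Y : {set V}) (P Q : pred V).

Definition meets e P : bool := [exists x in e, P x].

Definition crosses e X : bool := (e :&: X != set0) && (e :&: ~: X != set0).

Lemma eq_meets e P Q : {in e, P =1 Q} -> meets e P = meets e Q.
Proof. by move=> PQ; apply: eq_existsb => x; case: (boolP (x \in e)) => // /PQ->. Qed.

Lemma meets_sub e P Q : {in e, forall x, P x -> Q x} -> meets e P -> meets e Q.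
Proof. by move=> PQ /exists_inP[x xe /(PQ x xe) Qx]; apply/exists_inP; exists x. Qed.

Lemma meets_or e P Q : meets e (fun x => P x || Q x) = meets e P || meets e Q.
Proof.
apply/exists_inP/orP => [[x xe /orP[]] | [] /exists_inP[x xe]] Hx.
- by left; apply/exists_inP; exists x.
- by right; apply/exists_inP; exists x.
- by exists x; rewrite ?Hx ?orbT.
- by exists x; rewrite ?Hx ?orbT.
Qed.

Lemma meets_split e P X :
  meets e P = meets e (fun x => P x && (x \in X)) || meets e (fun x => P x && (x \notin X)).
Proof. by rewrite -meets_or; apply: eq_meets => x _; rewrite -andb_orr orbN andbT. Qed.

Lemma meets_setI e X : (e :&: X != set0) = meets e (fun x => x \in X).
Proof.
apply/set0Pn/exists_inP => [[x] | [x xe xX]]; last by exists x; rewrite inE xe.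
by rewrite inE => /andP[xe xX]; exists x.
Qed.

Lemma crossesE e X : crosses e X = meets e (fun x => x \in X) && meets e (fun x => x \notin X).
Proof. by rewrite /crosses !meets_setI; congr (_ && _); apply: eq_meets => x _; rewrite inE. Qed.

Lemma crosses_setC e X : crosses e (~: X) = crosses e X.
Proof. by rewrite /crosses setCK andbC. Qed.

Lemma crosses_disjoint e X Y :
  [disjoint X & Y] -> e :&: X != set0 -> e :&: Y != set0 -> crosses e X.
Proof.
move=> XY eX /set0Pn[y]; rewrite inE => /andP[ye yY].
rewrite /crosses eX; apply/set0Pn; by exists y; rewrite !inE ye (disjointFl XY yY).
Qed.

Lemma dcut_sum E X : dcut E X = \sum_(e <- E) crosses e X.
Proof. exact: count_sumE. Qed.

Lemma dcut_setC E X : dcut E (~: X) = dcut E X.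
Proof. by rewrite !dcut_sum; apply: eq_bigr => e _; rewrite crosses_setC. Qed.

End Crossing.

Section Extension.
Variables (V : finType) (k : nat) (Z : 'I_k.-1 -> {set V}).
Hypothesis Z_disj : forall t t', t != t' -> [disjoint Z t & Z t'].

Definition rest : {set V} := ~: \bigcup_t Z t.

Definition extend_part (s : 'I_k) : {set V} := oapp Z rest (insub (val s)).

Lemma extend_part_last (s : 'I_k) : val s = k.-1 -> extend_part s = rest.
Proof. by move=> sk; rewrite /extend_part insubN // sk ltnn. Qed.

Lemma extend_part_lt (s : 'I_k) (sk : s < k.-1) : extend_part s = Z (Ordinal sk).
Proof.
rewrite /extend_part; case: insubP => [t _ st | ]; last by rewrite sk.
by congr Z; apply: val_inj.
Qed.

Lemma extend_part_disjoint (s s' : 'I_k) : s != s' -> [disjoint extend_part s & extend_part s'].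
Proof.
have Z_rest t : [disjoint Z t & rest] by rewrite -subsets_disjoint (bigcup_sup t).
rewrite /extend_part => ss'; case: insubP => [t _ st | ks]; case: insubP => [t' _ st' | ks'] /=.
- apply: Z_disj; apply: contraNneq ss' => tt'.
  by apply/eqP/val_inj; rewrite -st -st' tt'.
- exact: Z_rest.
- by rewrite disjoint_sym.
- by rewrite -!leqNgt in ks ks'; rewrite (ord_pred_le_eq ks ks') eqxx in ss'.
Qed.

Lemma extend_part_kpartition :
  0 < k -> (forall t, Z t != set0) -> rest != set0 -> kpartition extend_part.
Proof.
move=> k_gt0 Z_neq0 rest_neq0; split; [|split].
- by move=> s; rewrite /extend_part; case: insubP => [t _ _ | _] /=; [apply: Z_neq0 | apply: rest_neq0].
- exact: extend_part_disjoint.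
move=> x; case: (boolP (x \in \bigcup_t Z t)) => [/bigcupP[t _ xt] | x_rest].
  by exists (widen_ord (leq_pred k) t); rewrite /extend_part /= valK.
have k_last : k.-1 < k by rewrite prednK.
by exists (Ordinal k_last); rewrite extend_part_last // inE.
Qed.

Lemma cost_extend_part E :
  cost E extend_part <= \sum_(e <- E) [exists t, crosses e (Z t)].
Proof.
rewrite /cost -count_sumE; apply: sub_count => e /existsP[s /existsP[s' /and3P[ss' es es']]].
have crosses_part s1 s2 : s1 != s2 -> e :&: extend_part s1 != set0 ->
    e :&: extend_part s2 != set0 -> (s1 < k.-1) -> [exists t, crosses e (Z t)].
  move=> s12 e1 e2 s1k; apply/existsP; exists (Ordinal s1k).
  by rewrite -extend_part_lt; apply: crosses_disjoint (extend_part_disjoint s12) e1 e2.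
case: (ltnP s k.-1) => [sk | ks]; first exact: crosses_part ss' es es' sk.
have s'k : s' < k.-1.
  by rewrite ltnNge; apply: contra ss' => ks'; rewrite (ord_pred_le_eq ks ks').
by apply: (crosses_part s' s) => //; rewrite eq_sym.
Qed.

End Extension.

Section Depth.
Variables (V : finType) (p : nat) (A : 'I_p -> {set V}).
Implicit Types (J : {set 'I_p}) (e : {set V}) (x y : V).

Definition depth J x : nat := #|[set l in J | x \in A l]|.

Definition shared J : {set V} := [set x | 1 < depth J x].

Definition separated J x y : bool := ~~ [exists l in J, (x \in A l) && (y \in A l)].

Definition splits J e : bool :=
  meets e (fun x => meets e (fun y => [&& depth J x == 1, depth J y == 1 & separated J x y])).

(* With N and L the vertices of depth 0 and of depth at least 2, [weight J e]
   is [crosses e N + crosses e L], raised to 2 when [splits J e]. *)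
Definition weight_of (split none multi single : bool) : nat :=
  if split || none && multi then 2 else (1 < single + none + multi).

Definition weight J e : nat :=
  weight_of (splits J e) (meets e (fun x => depth J x == 0))
    (meets e (fun x => 1 < depth J x)) (meets e (fun x => depth J x == 1)).

Definition core l : {set V} := A l :\: \bigcup_(m | m != l) A m.

Lemma depth0 x : depth set0 x = 0.
Proof. by apply/eqP; rewrite cards_eq0; apply/eqP/setP => l; rewrite !inE. Qed.

Lemma depth_setU1 J l x : l \notin J -> depth (l |: J) x = depth J x + (x \in A l).
Proof.
move=> lJ; rewrite /depth; case: (boolP (x \in A l)) => xl.
  have -> : [set m in l |: J | x \in A m] = l |: [set m in J | x \in A m].
    by apply/setP => m; rewrite !inE; case: eqP => // ->; rewrite xl.
  by rewrite cardsU1 inE (negbTE lJ) addnC.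
rewrite addn0; apply: eq_card => m; rewrite !inE; case: eqP => //= ->.
by rewrite (negbTE xl) andbF.
Qed.

Lemma depth_set2 i j x : i != j -> depth [set i; j] x = (x \in A i) + (x \in A j).
Proof.
move=> ij; rewrite -[[set j]]setU0 depth_setU1 ?depth_setU1 ?depth0 ?inE ?orbF //.
by rewrite add0n addnC.
Qed.

Lemma depth1_eq J x l m : depth J x = 1 -> l \in J -> m \in J ->
  x \in A l -> x \in A m -> l = m.
Proof.
move=> /eqP/cards1P[n Jx] lJ mJ xl xm.
have : l \in [set l in J | x \in A l] by rewrite inE lJ xl.
have : m \in [set l in J | x \in A l] by rewrite inE mJ xm.
by rewrite Jx !inE => /eqP-> /eqP->.
Qed.

Lemma weight_of_mono s n o z s' n' o' z' : s ==> s' -> n ==> n' -> o ==> o' ->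
  z ==> z' -> weight_of s n o z <= weight_of s' n' o' z'.
Proof. by case: s s' n n' o o' z z' => [] [] [] [] [] [] [] []. Qed.

Lemma splits_set2 i j e : i != j -> splits [set i; j] e ==>
  meets e (fun x => (x \in A i) && (x \notin A j))
  && meets e (fun x => (x \notin A i) && (x \in A j)).
Proof.
move=> ij; apply/implyP => /exists_inP[x xe /exists_inP[y ye /and3P[]]].
rewrite !depth_set2 // => dx dy sep.
have [sep_i sep_j] : ~~ ((x \in A i) && (y \in A i)) /\ ~~ ((x \in A j) && (y \in A j)).
  by split; apply: contra sep => xy; apply/exists_inP; [exists i | exists j]; rewrite ?inE ?eqxx ?orbT.
move: sep_i sep_j dx dy.
case xi: (x \in A i); case xj: (x \in A j); case yi: (y \in A i); case yj: (y \in A j) => //= _ _ _ _.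
- by apply/andP; split; apply/exists_inP; [exists x | exists y]; rewrite ?xi ?xj ?yi ?yj.
- by apply/andP; split; apply/exists_inP; [exists y | exists x]; rewrite ?xi ?xj ?yi ?yj.
Qed.

Lemma weight_set2 i j e : i != j -> weight [set i; j] e <= crosses e (A i) + crosses e (A j).
Proof.
move=> ij; pose only_i := meets e (fun x => (x \in A i) && (x \notin A j)).
pose only_j := meets e (fun x => (x \notin A i) && (x \in A j)).
pose both := meets e (fun x => (x \in A i) && (x \in A j)).
pose neither := meets e (fun x => (x \notin A i) && (x \notin A j)).
rewrite /weight; have [-> -> ->] : [/\ meets e (fun x => depth [set i; j] x == 0) = neither,
    meets e (fun x => 1 < depth [set i; j] x) = both
  & meets e (fun x => depth [set i; j] x == 1) = only_i || only_j].
  by split; rewrite -?meets_or; apply: eq_meets => x _; rewrite depth_set2 //;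
    case: (x \in A i); case: (x \in A j).
have [-> ->] : crosses e (A i) = (only_i || both) && (only_j || neither)
    /\ crosses e (A j) = (only_j || both) && (only_i || neither).
  by split; rewrite crossesE -!meets_or; congr (_ && _); apply: eq_meets => x _;
    case: (x \in A i); case: (x \in A j).
have split_ij : splits [set i; j] e ==> only_i && only_j := splits_set2 e ij.
apply: leq_trans (weight_of_mono split_ij (implybb _) (implybb _) (implybb _)) _.
by move: (only_i) (only_j) (both) (neither) => [] [] [] [].
Qed.

Lemma weight_of_setU1_table
    (none_in none_out multi_in multi_out single_in single_out split_out c : bool) :
  split_out ==> single_out ->
  c ==> multi_in && [|| none_in, none_out, multi_out, single_in | single_out] ->
  weight_of (split_out || none_in && single_out) none_out
    [|| multi_in, multi_out | single_in] (single_out || none_in) + c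
  <= weight_of split_out (none_in || none_out) (multi_in || multi_out)
       (single_in || single_out)
     + ((none_in || single_in || multi_in) && (none_out || single_out || multi_out)).
Proof.
by case: none_in none_out multi_in multi_out single_in single_out split_out c
  => [] [] [] [] [] [] [] [].
Qed.

Section AddSet.
Variables (J : {set 'I_p}) (l : 'I_p) (e : {set V}).
Hypothesis lJ : l \notin J.

Local Notation d := (depth J).
Local Notation d' := (depth (l |: J)).
Local Notation none_in := (meets e (fun x => (d x == 0) && (x \in A l))).
Local Notation none_out := (meets e (fun x => (d x == 0) && (x \notin A l))).
Local Notation multi_in := (meets e (fun x => (1 < d x) && (x \in A l))).
Local Notation multi_out := (meets e (fun x => (1 < d x) && (x \notin A l))).
Local Notation single_in := (meets e (fun x => (d x == 1) && (x \in A l))).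
Local Notation single_out := (meets e (fun x => (d x == 1) && (x \notin A l))).
Local Notation split_out := (meets e (fun x => meets e (fun y =>
  [&& d x == 1, d y == 1, x \notin A l, y \notin A l & separated J x y]))).

Lemma weight_ge_split_out :
  weight_of split_out (none_in || none_out) (multi_in || multi_out) (single_in || single_out)
  <= weight J e.
Proof.
rewrite /weight -!meets_split; apply: weight_of_mono; rewrite ?implybb //.
by apply/implyP; apply: meets_sub => x _; apply: meets_sub => y _ /and5P[-> -> _ _ ->].
Qed.

Lemma split_out_single_out : split_out ==> single_out.
Proof.
apply/implyP; apply: meets_sub => x _ /exists_inP[y _ /and5P[dx _ xl _ _]].
by rewrite dx.
Qed.

Lemma crosses_added : crosses e (A l) =
  (none_in || single_in || multi_in) && (none_out || single_out || multi_out).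
Proof.
rewrite crossesE -!meets_or; congr (_ && _); apply: eq_meets => x _;
  by case: (x \in A l); case: (d x) => [|[|n]].
Qed.

Lemma crosses_added_shared : crosses e (A l :&: shared J) ==>
  multi_in && [|| none_in, none_out, multi_out, single_in | single_out].
Proof.
rewrite crossesE; apply/implyP => /andP[in_sh out_sh]; apply/andP; split.
  by move: in_sh; apply: meets_sub => x _; rewrite !inE andbC.
move: out_sh; rewrite -!meets_or; apply: meets_sub => x _; rewrite !inE.
by case: (x \in A l); case: (d x) => [|[|n]].
Qed.

Lemma meets_depth0_setU1 : meets e (fun x => d' x == 0) ==> none_out.
Proof.
apply/implyP; apply: meets_sub => x _; rewrite depth_setU1 //.
by case: (x \in A l) => /=; lia.
Qed.

Lemma meets_shared_setU1 : meets e (fun x => 1 < d' x) ==> [|| multi_in, multi_out | single_in].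
Proof.
rewrite -!meets_or; apply/implyP; apply: meets_sub => x _; rewrite depth_setU1 //.
by case: (x \in A l) => /=; lia.
Qed.

Lemma meets_depth1_setU1 : meets e (fun x => d' x == 1) ==> single_out || none_in.
Proof.
rewrite -!meets_or; apply/implyP; apply: meets_sub => x _; rewrite depth_setU1 //.
by case: (x \in A l) => /=; lia.
Qed.

Lemma splits_setU1 : splits (l |: J) e ==> split_out || none_in && single_out.
Proof.
apply/implyP => /exists_inP[x xe /exists_inP[y ye /and3P[]]].
rewrite !depth_setU1 // => dx dy sep.
have sepJ : separated J x y.
  by apply: contra sep => /exists_inP[m mJ xy]; apply/exists_inP; exists m; rewrite ?inE ?mJ ?orbT.
have not_both : ~~ ((x \in A l) && (y \in A l)).
  by apply: contra sep => xyl; apply/exists_inP; exists l; rewrite ?inE ?eqxx.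
move: not_both dx dy; case xl: (x \in A l); case yl: (y \in A l) => //= _;
  rewrite ?addn0 ?addn1 ?eqSS => dx dy.
- by apply/orP; right; apply/andP; split; apply/exists_inP; [exists x | exists y]; rewrite ?xl ?yl ?dx ?dy.
- by apply/orP; right; apply/andP; split; apply/exists_inP; [exists y | exists x]; rewrite ?xl ?yl ?dx ?dy.
- apply/orP; left; apply/exists_inP; exists x => //; apply/exists_inP; exists y => //.
  by rewrite dx dy xl yl sepJ.
Qed.

Lemma weight_setU1 :
  weight (l |: J) e + crosses e (A l :&: shared J) <= weight J e + crosses e (A l).
Proof.
apply: leq_trans (leq_add (weight_of_mono splits_setU1 meets_depth0_setU1
  meets_shared_setU1 meets_depth1_setU1) (leqnn _)) _.
apply: leq_trans (weight_of_setU1_table split_out_single_out crosses_added_shared) _.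
by rewrite crosses_added leq_add2r weight_ge_split_out.
Qed.

End AddSet.

Lemma in_core l x : (x \in core l) = (x \in A l) && (depth setT x == 1).
Proof.
rewrite inE andbC; case xl: (x \in A l) => //=; apply/idP/idP => [x_only | /eqP x1].
  apply/cards1P; exists l; apply/setP => m; rewrite !inE.
  case: eqP => [-> // | /eqP ml]; apply: contraNF x_only => xm.
  by apply/bigcupP; exists m.
by apply/bigcupP => -[m ml xm]; rewrite (depth1_eq x1 (in_setT m) (in_setT l) xm xl) eqxx in ml.
Qed.

Lemma notin_core l x : 1 < p -> (forall m, x \in A m) -> x \notin core l.
Proof.
move=> p_gt1 xA; rewrite in_core /depth.
have -> : [set m in setT | x \in A m] = setT by apply/setP => m; rewrite !inE xA.
by rewrite cardsT card_ord gtn_eqF ?andbF.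
Qed.

Lemma core_disjoint l m : l != m -> [disjoint core l & core m].
Proof.
move=> lm; rewrite -setI_eq0; apply/eqP/setP => x; rewrite inE !in_core in_set0.
apply/negP => /andP[/andP[xl /eqP x1] /andP[xm _]].
by rewrite (depth1_eq x1 (in_setT l) (in_setT m) xl xm) eqxx in lm.
Qed.

Lemma core_of_depth1 x : depth setT x = 1 -> exists l, x \in core l.
Proof.
move=> x1; have /cards1P[l xl] := introT eqP x1.
have : l \in [set m in setT | x \in A m] by rewrite xl set11.
by rewrite inE => /andP[_ lx]; exists l; rewrite in_core lx x1 eqxx.
Qed.

Lemma splits_cores e l m x y : l != m -> x \in e -> y \in e ->
  x \in core l -> y \in core m -> splits setT e.
Proof.
move=> lm xe ye; rewrite !in_core => /andP[xl x1] /andP[ym y1].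
apply/exists_inP; exists x => //; apply/exists_inP; exists y => //; rewrite x1 y1 /=.
apply/exists_inP => -[n _ /andP[xn yn]].
move: lm; rewrite -(depth1_eq (eqP x1) (in_setT n) (in_setT l) xn xl).
by rewrite -(depth1_eq (eqP y1) (in_setT n) (in_setT m) yn ym) eqxx.
Qed.

Lemma weight_crosses_cores e l m : l != m ->
  crosses e (core l) -> crosses e (core m) -> weight setT e = 2.
Proof.
move=> lm; rewrite !crossesE => /andP[/exists_inP[x xe xl] _] /andP[/exists_inP[y ye ym] _].
by rewrite /weight /weight_of (splits_cores lm xe ye xl ym).
Qed.

Lemma weight_crosses_core e l : crosses e (core l) -> 0 < weight setT e.
Proof.
rewrite crossesE /weight /weight_of => /andP[/exists_inP[x xe xl] /exists_inP[y ye yl]].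
have -> : meets e (fun x => depth setT x == 1).
  by apply/exists_inP; exists x; move: xl; rewrite // in_core => /andP[].
case: (ltngtP (depth setT y) 1) => [y0 | y2 | y1].
- have -> : meets e (fun x => depth setT x == 0).
    by apply/exists_inP; exists y; rewrite // -leqn0 -ltnS.
  by case: (_ || _).
- have -> : meets e (fun x => 1 < depth setT x) by apply/exists_inP; exists y.
  by case: (splits _ _); case: (meets _ _).
have [m ym] := core_of_depth1 y1.
have lm : l != m by apply: contraNneq yl => ->.
by rewrite (splits_cores lm xe ye xl ym).
Qed.

Lemma crossed_cores_le_weight n (c c' : 'I_n -> 'I_p) e : (forall s t, c s != c' t) ->
  [exists s, crosses e (core (c s))] + [exists t, crosses e (core (c' t))]
  <= weight setT e.
Proof.
move=> cc'; case: existsP => [[s es] | _]; case: existsP => [[t et] | _] //=.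
- by rewrite (weight_crosses_cores (cc' s t) es et).
- exact: weight_crosses_core es.
- exact: weight_crosses_core et.
Qed.

End Depth.

Section TerminalCut.
Variables (V : finType) (E : seq {set V}) (S T X : {set V}).
Hypothesis X_min : min_terminal_cut E S T (~: X).

Lemma min_terminal_cut_sub : T \subset X.
Proof. by case: X_min => /andP[_]; rewrite setCS. Qed.

Lemma min_terminal_cut_disjoint : [disjoint S & X].
Proof. by case: X_min => /andP[SX _] _; rewrite -[X]setCK -subsets_disjoint. Qed.

Lemma min_terminal_cut_le (Y : {set V}) : T \subset Y -> Y \subset X -> dcut E X <= dcut E Y.
Proof.
move=> TY YX; case: X_min => /andP[SX _] X_le; rewrite -dcut_setC -(dcut_setC E Y).
by apply: X_le; rewrite /terminal_cut !setCS TY andbT (subset_trans SX) ?setCS.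
Qed.

End TerminalCut.

Section Uncrossing.
Variables (V : finType) (E : seq {set V}) (p : nat) (A : 'I_p -> {set V}) (T : {set V}).
Hypothesis T_sub : forall l, T \subset A l.
Hypothesis A_min : forall l (Y : {set V}), T \subset Y -> Y \subset A l -> dcut E (A l) <= dcut E Y.

Lemma sum_weight_le (J : {set 'I_p}) i j : i != j -> i \in J -> j \in J ->
  \sum_(e <- E) weight A J e <= dcut E (A i) + dcut E (A j).
Proof.
move=> ij; have [n] := ubnP #|J|; elim: n J => // n IH J; rewrite ltnS => Jn iJ jJ.
case: (boolP (J \subset [set i; j])) => [Jij | /subsetPn[l lJ lij]].
  have -> : J = [set i; j] by apply/eqP; rewrite eqEsubset Jij subUset !sub1set iJ jJ.
  by rewrite !dcut_sum -big_split; apply: leq_sum => e _; apply: weight_set2.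
have lJ' : l \notin J :\ l by rewrite !inE eqxx.
have [iJ' jJ'] : i \in J :\ l /\ j \in J :\ l.
  by move: lij; rewrite !inE iJ jJ !andbT; case/norP; rewrite !(eq_sym l) => -> ->.
have T_shared : T \subset A l :&: shared A (J :\ l).
  rewrite subsetI T_sub; apply/subsetP => x xT; rewrite inE.
  apply: leq_trans (_ : #|[set i; j]| <= _); first by rewrite cards2 ij.
  apply/subset_leq_card/subsetP => m; rewrite in_set2 => /orP[] /eqP ->;
    by rewrite inE ?iJ' ?jJ' (subsetP (T_sub _)).
have add_l : \sum_(e <- E) weight A J e + dcut E (A l :&: shared A (J :\ l))
    <= \sum_(e <- E) weight A (J :\ l) e + dcut E (A l).
  rewrite !dcut_sum -!big_split /=; apply: leq_sum => e _.
  by rewrite -{1}(setD1K lJ); apply: weight_setU1.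
have := IH (J :\ l) _ iJ' jJ'; have := A_min T_shared (subsetIl _ _).
move: Jn; rewrite (cardsD1 l J) lJ; lia.
Qed.

End Uncrossing.

Section CorePartition.
Variables (V : finType) (p k : nat) (A : 'I_p -> {set V}) (R U : {set V}).
Hypothesis p_gt1 : 1 < p.
Hypothesis k_gt0 : 0 < k.
Hypothesis core_neq0 : forall l, core A l != set0.
Hypothesis R_neq0 : R != set0.
Hypothesis R_sub : R \subset U.
Hypothesis R_disjoint : forall l, [disjoint R & A l].
Hypothesis notU_sub : forall l, ~: U \subset A l.

Definition core_part (c : 'I_k.-1 -> 'I_p) : 'I_k -> {set V} :=
  extend_part (fun t => core A (c t)).

Lemma disjoint_cores (c : 'I_k.-1 -> 'I_p) : injective c ->
  forall t t', t != t' -> [disjoint core A (c t) & core A (c t')].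
Proof. by move=> c_inj t t' tt'; apply: core_disjoint; rewrite (inj_eq c_inj). Qed.

Lemma sub_rest_cores (c : 'I_k.-1 -> 'I_p) : R :|: ~: U \subset rest (fun t => core A (c t)).
Proof.
apply/subsetP => x xRU; rewrite inE; apply/bigcupP => -[t _]; apply/negP.
case/setUP: xRU => [xR | xU]; last by apply: notin_core => // m; apply: (subsetP (notU_sub m)).
by apply: contraTN xR => /setDP[xA _]; rewrite (disjointFl (R_disjoint (c t)) xA).
Qed.

Lemma core_part_kpartition c : injective c -> kpartition (core_part c).
Proof.
move=> c_inj; have [r rR] := set0Pn _ R_neq0.
apply: extend_part_kpartition (disjoint_cores c_inj) k_gt0 _ _ => [t //|].
by apply/set0Pn; exists r; apply: (subsetP (sub_rest_cores c)); rewrite inE rR.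
Qed.

Lemma core_part_last c (l : 'I_k) : val l = k.-1 -> ~: U \proper core_part c l.
Proof.
move=> lk; have [r rR] := set0Pn _ R_neq0.
rewrite /core_part extend_part_last //; apply/properP; split.
  by apply: subset_trans (sub_rest_cores c); apply: subsetUr.
exists r; last by rewrite inE negbK (subsetP R_sub).
by apply: (subsetP (sub_rest_cores c)); rewrite inE rR.
Qed.

Lemma cost_core_parts E c c' : injective c -> injective c' -> (forall s t, c s != c' t) ->
  cost E (core_part c) + cost E (core_part c') <= \sum_(e <- E) weight A setT e.
Proof.
move=> c_inj c'_inj cc'.
apply: leq_trans (leq_add (cost_extend_part (disjoint_cores c_inj) E)
  (cost_extend_part (disjoint_cores c'_inj) E)) _.
by rewrite -big_split; apply: leq_sum => e _; apply: crossed_cores_le_weight.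
Qed.

End CorePartition.

Theorem theorem3p1 (V : finType) (E : seq {set V}) (k p : nat)
  (R U : {set V}) (u : 'I_p -> V) (A : 'I_p -> {set V}) :
  2 <= k ->
  R != set0 -> R \proper U -> U \proper [set: V] ->
  injective u ->
  [set u i | i in 'I_p] \subset U :\: R ->
  2 * k - 2 <= p ->
  (forall i : 'I_p,
     min_terminal_cut E (([set u j | j in 'I_p] :|: R) :\ u i) (~: U) (~: A i)) ->
  (forall i : 'I_p,
     u i \in A i :\: \bigcup_(j in 'I_p | j != i) A j) ->
  exists P : 'I_k -> {set V},
    kpartition P /\
    (forall l : 'I_k, val l = k.-1 -> ~: U \proper P l) /\
    (forall i j : 'I_p, i != j -> 2 * cost E P <= dcut E (A i) + dcut E (A j)).
Proof.
move=> k_ge2 R_neq0 /proper_sub R_sub _ _ uS pk A_cut u_core.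
have notU_sub l := min_terminal_cut_sub (A_cut l).
have A_min l := min_terminal_cut_le (A_cut l).
have R_disjoint l : [disjoint R & A l].
  apply: disjointWl (min_terminal_cut_disjoint (A_cut l)); apply/subsetP => x xR.
  have /setDP[_ ul] := subsetP uS (u l) (imset_f u (isT : l \in 'I_p)).
  by rewrite !inE xR orbT andbT; apply: contraNneq ul => <-.
have core_neq0 l : core A l != set0 by apply/set0Pn; exists (u l).
have [c0 [c1 [c0_inj c1_inj c01]]] := @disjoint_injections k.-1 p ltac:(lia).
have cost_le := cost_core_parts A E c0_inj c1_inj c01.
exists (if cost E (core_part A c0) <= cost E (core_part A c1) then core_part A c0 else core_part A c1).
split; [|split].
- by case: ifP => _; apply: (core_part_kpartition (R := R) (U := U)) => //; lia.
- by case: ifP => _ l lk; apply: (core_part_last (R := R)) => //; lia.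
move=> i j ij; have := leq_trans cost_le (sum_weight_le notU_sub A_min ij (in_setT i) (in_setT j)).
by case: ifP; lia.
Qed.
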